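(* Let $n\ge2$. For every $\Gamma\cup\{\varphi\}\subseteq{\bf F}(\Sigma,\mathcal{V})$: $\Gamma\vdash_{C_n}\varphi$ iff $\Gamma\vDash^{\mathsf{RN}}_{\mathcal{RM}_{C_n}}\varphi$.
   Context: $\Sigma$ has unary $\neg$ and binary $\wedge,\vee,\to$; ${\bf F}(\Sigma,\mathcal{V})$ its formulas over a denumerable set $\mathcal{V}$. $\alpha^0=\alpha$, $\alpha^{k+1}=\neg(\alpha^k\wedge\neg\alpha^k)$; $\alpha^{(1)}=\alpha^1$, $\alpha^{(k+1)}=\alpha^{(k)}\wedge\alpha^{k+1}$. $C_n$ is the Hilbert calculus with Modus Ponens and axiom schemata: $\alpha\to(\beta\to\alpha)$; $(\alpha\to(\beta\to\gamma))\to((\alpha\to\beta)\to(\alpha\to\gamma))$; $\alpha\to(\beta\to(\alpha\wedge\beta))$; $(\alpha\wedge\beta)\to\alpha$; $(\alpha\wedge\beta)\to\beta$; $\alpha\to(\alpha\vee\beta)$; $\beta\to(\alpha\vee\beta)$; $(\alpha\to\gamma)\to((\beta\to\gamma)\to((\alpha\vee\beta)\to\gamma))$; $\alpha\vee\neg\alpha$; $\neg\neg\alpha\to\alpha$; $\alpha^{(n)}\to(\alpha\to(\neg\alpha\to\beta))$; $(\alpha^{(n)}\wedge\beta^{(n)})\to((\alpha\wedge\beta)^{(n)}\wedge(\alpha\vee\beta)^{(n)}\wedge(\alpha\to\beta)^{(n)})$. $B_n=\{z\in\{0,1\}^{n+1}:(z_1\wedge\dots\wedge z_k)\vee z_{k+1}=1\text{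 for all }1\le k\le n\}$, with elements $T_n=(1,0,1,\dots,1)$, $t^n_i$ ($0\le i\le n-2$) having $z_1=z_2=1$ and a single $0$ at coordinate $i+3$, $t^n_{n-1}=(1,\dots,1)$, $F_n=(0,1,\dots,1)$. $D_n=\{z:z_1=1\}$, $Boo_n=\{T_n,F_n\}$, $I_n=B_n\setminus Boo_n$. $\mathcal{A}_{C_n}$ on $B_n$: $\tilde\neg z=\{w\in B_n:w_1=z_2,\ w_2\le z_1\}$; for $\#\in\{\wedge,\vee,\to\}$, $z\tilde\#w=\{u\in Boo_n:u_1=z_1\#w_1\}$ if $z,w\in Boo_n$, else $\{u\in B_n:u_1=z_1\#w_1\}$. A valuation is $\nu$ with $\nu(\neg\alpha)\in\tilde\neg\nu(\alpha)$, $\nu(\alpha\#\beta)\in\nu(\alpha)\tilde\#\nu(\beta)$. $\mathcal{F}_{C_n}$: valuations with $\nu(\alpha)=t^n_0\Rightarrow\nu(\alpha\wedge\neg\alpha)=T_n$, and for $1\le k\le n-1$, $\nu(\alpha)=t^n_k\Rightarrow(\nu(\alpha\wedge\neg\alpha)\in I_n$ and $\nu(\alpha^1)=t^n_{k-1})$. $\mathcal{RM}_{C_n}=(\mathcal{A}_{C_n},D_n,\mathcal{F}_{C_n})$; $\Gamma\vDash^{\mathsf{RN}}_{\mathcal{RM}_{C_n}}\varphi$ iff every $\nu\in\mathcal{F}_{C_n}$ with $\nu[\Gamma]\subseteq D_n$ has $\nu(\varphi)\in D_n$. *)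

From Stdlib Require Import List Arith Bool.
Import ListNotations.

Inductive form : Type :=
| Var : nat -> form
| Neg : form -> form
| And : form -> form -> form
| Or  : form -> form -> form
| Imp : form -> form -> form.

Fixpoint fpow (k : nat) (a : form) : form :=
  match k with
  | 0 => a
  | S k' => Neg (And (fpow k' a) (Neg (fpow k' a)))
  end.

(** alpha^{(k)} for k >= 1: alpha^{(1)} = alpha^1, alpha^{(k+1)} = alpha^{(k)} /\ alpha^{k+1}.
    Indexed here so that [fwell k a] = alpha^{(k+1)}. *)
Fixpoint fwell_aux (k : nat) (a : form) : form :=
  match k with
  | 0 => fpow 1 a
  | S k' => And (fwell_aux k' a) (fpow (S (S k')) a)
  end.
Definition fwell (k : nat) (a : form) : form := fwell_aux (k - 1) a.
(* fwell k a = alpha^{(k)} for k >= 1 *)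

Inductive axiomCn (n : nat) : form -> Prop :=
| Ax1 a b : axiomCn n (Imp a (Imp b a))
| Ax2 a b c : axiomCn n (Imp (Imp a (Imp b c)) (Imp (Imp a b) (Imp a c)))
| Ax3 a b : axiomCn n (Imp a (Imp b (And a b)))
| Ax4 a b : axiomCn n (Imp (And a b) a)
| Ax5 a b : axiomCn n (Imp (And a b) b)
| Ax6 a b : axiomCn n (Imp a (Or a b))
| Ax7 a b : axiomCn n (Imp b (Or a b))
| Ax8 a b c : axiomCn n (Imp (Imp a c) (Imp (Imp b c) (Imp (Or a b) c)))
| Ax9 a : axiomCn n (Or a (Neg a))
| Ax10 a : axiomCn n (Imp (Neg (Neg a)) a)
| Ax11 a b : axiomCn n (Imp (fwell n a) (Imp a (Imp (Neg a) b)))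
| Ax12 a b : axiomCn n
    (Imp (And (fwell n a) (fwell n b))
         (And (And (fwell n (And a b)) (fwell n (Or a b))) (fwell n (Imp a b)))).

Inductive derivCn (n : nat) (Gamma : form -> Prop) : form -> Prop :=
| DHyp a : Gamma a -> derivCn n Gamma a
| DAx a : axiomCn n a -> derivCn n Gamma a
| DMP a b : derivCn n Gamma a -> derivCn n Gamma (Imp a b) -> derivCn n Gamma b.

(** Truth values: elements of {0,1}^{n+1} as lists of booleans of length n+1
    (true = 1). Coordinates are 1-indexed: coord z i = z_i. *)
Definition tv := list bool.
Definition coord (z : tv) (i : nat) : bool := nth (pred i) z false.

Definition inB (n : nat) (z : tv) : Prop :=
  length z = n + 1 /\
  forall k, 1 <= k <= n -> (forallb (fun b => b) (firstn k z) || coord z (k + 1)) = true.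

Definition Tn (n : nat) : tv := true :: false :: repeat true (n - 1).
Definition Fn (n : nat) : tv := false :: repeat true n.
(** t^n_i : z_1 = z_2 = 1, a single 0 at coordinate i+3 (for i <= n-2);
    for i = n-1 this yields (1,...,1). *)
Definition tn (n i : nat) : tv :=
  map (fun j => negb (Nat.eqb j (i + 2))) (seq 0 (n + 1)).

Definition inD (z : tv) : Prop := coord z 1 = true.
Definition inBoo (n : nat) (z : tv) : Prop := z = Tn n \/ z = Fn n.
Definition inI (n : nat) (z : tv) : Prop := inB n z /\ ~ inBoo n z.

Definition negM (n : nat) (z w : tv) : Prop :=
  inB n w /\ coord w 1 = coord z 2 /\ Bool.le (coord w 2) (coord z 1).

Definition binM (n : nat) (op : bool -> bool -> bool) (z w u : tv) : Prop :=
  ((inBoo n z /\ inBoo n w) -> inBoo n u /\ coord u 1 = op (coord z 1) (coord w 1)) /\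
  (~ (inBoo n z /\ inBoo n w) -> inB n u /\ coord u 1 = op (coord z 1) (coord w 1)).

Definition valuation (n : nat) (nu : form -> tv) : Prop :=
  (forall a, inB n (nu a)) /\
  (forall a, negM n (nu a) (nu (Neg a))) /\
  (forall a b, binM n andb (nu a) (nu b) (nu (And a b))) /\
  (forall a b, binM n orb (nu a) (nu b) (nu (Or a b))) /\
  (forall a b, binM n implb (nu a) (nu b) (nu (Imp a b))).

Definition inFCn (n : nat) (nu : form -> tv) : Prop :=
  valuation n nu /\
  (forall a, nu a = tn n 0 -> nu (And a (Neg a)) = Tn n) /\
  (forall a k, 1 <= k <= n - 1 -> nu a = tn n k ->
     inI n (nu (And a (Neg a))) /\ nu (fpow 1 a) = tn n (k - 1)).

Definition RNconseq (n : nat) (Gamma : form -> Prop) (phi : form) : Prop :=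
  forall nu, inFCn n nu -> (forall g, Gamma g -> inD (nu g)) -> inD (nu phi).

(* The key
   semantic fact is that alpha^(n) is designated exactly when alpha takes one of the
   boolean values T_n, F_n: the restriction F_{C_n} makes the powers of a value t^n_k
   descend t^n_k, t^n_{k-1}, ..., t^n_0, and then alpha^(k+1) is false.

   Completeness: if Gamma does not derive phi, a Lindenbaum construction extends Gamma
   to a theory D that is maximal among those not deriving phi.  Such a D decides every
   formula, behaves classically on /\, \/, ->, and proves alpha^(n) for every alpha it
   does not prove inconsistent.  The canonical valuation sends x to F_n if D does not
   prove x, to T_n if D proves x but not ~x, and to t^n_k if D proves both, where k+1
   is the number of inconsistent powers x^0, ..., x^k ("depth" of x).  This valuation
   lies in F_{C_n} and designates exactly the theorems of D, so it refutes phi.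

   All lemmas hold for n >= 1. *)

From Stdlib Require Import List Arith Bool Lia Classical ClassicalEpsilon Cantor Wf_nat.

Definition extend (G : form -> Prop) (a : form) : form -> Prop := fun x => G x \/ x = a.

Section Hilbert.

Variable n : nat.
Local Notation "G ⊢ a" := (derivCn n G a) (at level 70).

Lemma deriv_mono (G G' : form -> Prop) a : (forall x, G x -> G' x) -> G ⊢ a -> G' ⊢ a.
Proof.
  intros HG D; induction D as [x Hx|x Hx|x y _ IH1 _ IH2].
  - now apply DHyp, HG.
  - now apply DAx.
  - exact (DMP _ _ _ _ IH1 IH2).
Qed.

Lemma deriv_id G a : G ⊢ Imp a a.
Proof.
  apply (DMP _ _ (Imp a (Imp a a))); [apply DAx, Ax1|].
  apply (DMP _ _ (Imp a (Imp (Imp a a) a))); [apply DAx, Ax1|].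
  apply DAx, Ax2.
Qed.

(* The deduction theorem: MP is the only rule, and Ax1, Ax2 are available. *)
Lemma deduction G a b : extend G a ⊢ b -> G ⊢ Imp a b.
Proof.
  intro D; induction D as [x [Hx| ->]|x Hx|x y _ IH1 _ IH2].
  - apply (DMP _ _ x); [now apply DHyp | apply DAx, Ax1].
  - apply deriv_id.
  - apply (DMP _ _ x); [now apply DAx | apply DAx, Ax1].
  - apply (DMP _ _ _ _ IH1). apply (DMP _ _ _ _ IH2). apply DAx, Ax2.
Qed.

Lemma deriv_and G a b : G ⊢ And a b <-> G ⊢ a /\ G ⊢ b.
Proof.
  split.
  - intro H; split; apply (DMP _ _ _ _ H), DAx; constructor.
  - intros [A B]. apply (DMP _ _ _ _ B). apply (DMP _ _ _ _ A). apply DAx, Ax3.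
Qed.

Lemma deriv_neg_neg G a : G ⊢ Neg (Neg a) -> G ⊢ a.
Proof. intro H; apply (DMP _ _ _ _ H), DAx, Ax10. Qed.

End Hilbert.

Lemma fpow_add j k a : fpow j (fpow k a) = fpow (j + k) a.
Proof. induction j as [|j IH]; simpl; [reflexivity | now rewrite IH]. Qed.

(* A predicate commuting with /\ holds of a^(n) iff it holds of a^1, ..., a^n;
   used both for derivability and for designated values. *)
Lemma conj_pred_fwell (P : form -> Prop) n a :
  (forall x y, P (And x y) <-> P x /\ P y) -> 1 <= n ->
  (P (fwell n a) <-> forall j, 1 <= j <= n -> P (fpow j a)).
Proof.
  intros HP Hn.
  assert (Aux : forall k, P (fwell_aux k a) <-> forall j, 1 <= j <= S k -> P (fpow j a)).
  { induction k as [|k IH]; cbn [fwell_aux].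
    - split; [intros H j Hj; now replace j with 1 by lia | intro H; apply H; lia].
    - rewrite HP, IH. split.
      + intros [H1 H2] j Hj. destruct (Nat.eq_dec j (S (S k))) as [->|]; [exact H2|]. apply H1; lia.
      + intro H; split; [intros j Hj|]; apply H; lia. }
  unfold fwell; rewrite Aux. now replace (S (n - 1)) with n by lia.
Qed.

Fixpoint code (a : form) : nat :=
  match a with
  | Var i => to_nat (0, i)
  | Neg a => to_nat (1, code a)
  | And a b => to_nat (2, to_nat (code a, code b))
  | Or a b => to_nat (3, to_nat (code a, code b))
  | Imp a b => to_nat (4, to_nat (code a, code b))
  end.

Lemma to_nat_inj x y x' y' : to_nat (x, y) = to_nat (x', y') -> x = x' /\ y = y'.
Proof.
  intro H. apply (f_equal of_nat) in H. rewrite !cancel_of_to in H. now injection H.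
Qed.

Lemma code_inj a b : code a = code b -> a = b.
Proof.
  revert b; induction a as [i|a IH|a IHa c IHc|a IHa c IHc|a IHa c IHc];
    intros [j|b|b d|b d|b d] E; cbn [code] in E;
    repeat match goal with H : to_nat _ = to_nat _ |- _ =>
      apply to_nat_inj in H; destruct H end;
    try discriminate; f_equal; auto.
Qed.

Definition maximal (n : nat) (D : form -> Prop) (phi : form) : Prop :=
  ~ derivCn n D phi /\ forall x, ~ derivCn n D x -> derivCn n (extend D x) phi.

Section Lindenbaum.

Variables (n : nat) (G : form -> Prop) (phi : form).
Local Notation "G ⊢ a" := (derivCn n G a) (at level 70).

Fixpoint stage (i : nat) : form -> Prop :=
  match i with
  | 0 => G
  | S i => fun x => stage i x \/ (code x = i /\ ~ extend (stage i) x ⊢ phi)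
  end.

Definition limit (x : form) : Prop := exists i, stage i x.

Lemma stage_mono i j x : i <= j -> stage i x -> stage j x.
Proof. induction 1; simpl; auto. Qed.

(* Derivations are finite, so a derivation from the limit uses a single stage. *)
Lemma limit_compact a : limit ⊢ a -> exists i, stage i ⊢ a.
Proof.
  intro D; induction D as [x [i Hx]|x Hx|x y _ [i IH1] _ [j IH2]].
  - exists i; now apply DHyp.
  - exists 0; now apply DAx.
  - exists (max i j). apply (DMP _ _ x).
    + apply (deriv_mono _ (stage i)); [intros; apply (stage_mono i); [lia|auto] | exact IH1].
    + apply (deriv_mono _ (stage j)); [intros; apply (stage_mono j); [lia|auto] | exact IH2].
Qed.

Lemma stage_unprovable : ~ G ⊢ phi -> forall i, ~ stage i ⊢ phi.
Proof.
  intros H0 i; induction i as [|i IH]; simpl; auto.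
  destruct (classic (exists x, code x = i /\ ~ extend (stage i) x ⊢ phi)) as [[x [Ex Nx]]|Nx].
  - intro D; apply Nx. revert D; apply deriv_mono; intros y Hy.
    destruct Hy as [Hy|[Ey _]]; [now left | right; apply code_inj; congruence].
  - intro D; apply IH. revert D; apply deriv_mono; intros y Hy.
    destruct Hy as [Hy|Hy]; [exact Hy | exfalso; apply Nx; now exists y].
Qed.

(* The limit is maximal for phi: a formula outside it was rejected at its stage. *)
Lemma limit_maximal : ~ G ⊢ phi -> maximal n limit phi.
Proof.
  intro H0; split.
  - intro D. destruct (limit_compact _ D) as [i Di]. exact (stage_unprovable H0 i Di).
  - intros x Nx. apply NNPP; intro Nd. apply Nx, DHyp. exists (S (code x)); right; split; auto.
    intro D; apply Nd. revert D; apply deriv_mono; intros y Hy.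
    destruct Hy as [Hy|Hy]; [left; now exists (code x) | now right].
Qed.

End Lindenbaum.

Lemma lindenbaum n G phi :
  ~ derivCn n G phi -> exists D, (forall x, G x -> D x) /\ maximal n D phi.
Proof.
  intro H0. exists (limit n G phi). split; [intros x Hx; now exists 0 | now apply limit_maximal].
Qed.

Definition incons (n : nat) (D : form -> Prop) (a : form) : Prop :=
  derivCn n D a /\ derivCn n D (Neg a).

Section Explosion.

Variables (n : nat) (G : form -> Prop).
Local Notation "G ⊢ a" := (derivCn n G a) (at level 70).

Lemma explosion a b : G ⊢ fwell n a -> incons n G a -> G ⊢ b.
Proof.
  intros W [A NA]. apply (DMP _ _ _ _ NA). apply (DMP _ _ _ _ A). apply (DMP _ _ _ _ W).
  apply DAx, Ax11.
Qed.

Lemma incons_of_neg_pow1 a : G ⊢ Neg (fpow 1 a) -> incons n G a.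
Proof. intro H. now apply deriv_neg_neg, deriv_and in H. Qed.

End Explosion.

Section Depth.

Variables (n : nat) (D : form -> Prop).
Local Notation "G ⊢ a" := (derivCn n G a) (at level 70).

(* k is the depth of x in D: x^0, ..., x^k are inconsistent, D does not prove x^(k+1),
   and k <= n-1 so that t^n_k is a meaningful truth value. *)
Definition depth_spec (x : form) (k : nat) : Prop :=
  k <= n - 1 /\ (forall j, j <= k -> incons n D (fpow j x)) /\ ~ D ⊢ fpow (S k) x.

(* The depth is unique, since inconsistent formulas are derivable. *)
Lemma depth_spec_unique x k k' : depth_spec x k -> depth_spec x k' -> k = k'.
Proof.
  intros (_ & Ik & Nk) (_ & Ik' & Nk').
  destruct (Nat.lt_total k k') as [L|[E|L]]; [exfalso | exact E | exfalso].
  - apply Nk, (Ik' (S k)); lia.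
  - apply Nk', (Ik (S k')); lia.
Qed.

Lemma depth_spec_pow1 x k : depth_spec x (S k) -> depth_spec (fpow 1 x) k.
Proof.
  intros (Hk & Ik & Nk). split; [lia | split].
  - intros j Hj. rewrite fpow_add, Nat.add_1_r. apply Ik; lia.
  - now rewrite fpow_add, Nat.add_1_r.
Qed.

End Depth.

Section MaximalTheory.

Variables (n : nat) (D : form -> Prop) (phi : form).
Hypothesis Hn : 1 <= n.
Hypothesis Hmax : maximal n D phi.
Local Notation "G ⊢ a" := (derivCn n G a) (at level 70).

Lemma max_or a b : D ⊢ Or a b <-> D ⊢ a \/ D ⊢ b.
Proof.
  split.
  - intro H. apply NNPP; intros [Na Nb]%not_or_and. apply (proj1 Hmax).
    apply (DMP _ _ _ _ H). apply (DMP _ _ _ _ (deduction _ _ _ _ (proj2 Hmax b Nb))).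
    apply (DMP _ _ _ _ (deduction _ _ _ _ (proj2 Hmax a Na))). apply DAx, Ax8.
  - intros [A|B]; [apply (DMP _ _ _ _ A) | apply (DMP _ _ _ _ B)]; apply DAx; constructor.
Qed.

Lemma max_excluded a : D ⊢ a \/ D ⊢ Neg a.
Proof. apply max_or, DAx, Ax9. Qed.

Lemma max_well_consistent a : D ⊢ fwell n a -> ~ incons n D a.
Proof. intros W I. exact (proj1 Hmax (explosion _ _ _ _ W I)). Qed.

Lemma max_pow1 a : ~ incons n D a -> D ⊢ fpow 1 a /\ ~ incons n D (fpow 1 a).
Proof.
  intro Ca. split.
  - destruct (max_excluded (fpow 1 a)) as [H|H]; [exact H|].
    now apply incons_of_neg_pow1 in H.
  - intros [_ H]. now apply Ca, incons_of_neg_pow1.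
Qed.

Lemma max_pow a j : ~ incons n D a -> D ⊢ fpow (S j) a /\ ~ incons n D (fpow (S j) a).
Proof.
  intro Ca. induction j as [|j [_ IH]]; [now apply max_pow1|].
  exact (max_pow1 _ IH).
Qed.

Lemma max_consistent_well a : ~ incons n D a -> D ⊢ fwell n a.
Proof.
  intro Ca. apply (conj_pred_fwell (derivCn n D)); [apply deriv_and | exact Hn |].
  intros [|j] Hj; [lia | apply (max_pow _ _ Ca)].
Qed.

(* Maximal theories treat -> classically: if D does not prove a, then D proves ~a
   and a^(n), so a -> b follows by Ax11. *)
Lemma max_imp a b : D ⊢ Imp a b <-> (D ⊢ a -> D ⊢ b).
Proof.
  split; [intros I A; exact (DMP _ _ _ _ A I)|].
  intro I. destruct (classic (D ⊢ a)) as [A|A].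
  - apply (DMP _ _ _ _ (I A)), DAx, Ax1.
  - destruct (max_excluded a) as [|NA]; [contradiction|].
    assert (W : D ⊢ fwell n a) by (apply max_consistent_well; now intros []).
    assert (HD : forall y, D y -> extend D a y) by (intros; now left).
    apply deduction, (explosion _ _ a); [exact (deriv_mono _ _ _ _ HD W)|].
    split; [now apply DHyp; right | exact (deriv_mono _ _ _ _ HD NA)].
Qed.

Lemma max_consistent_closed a b : ~ incons n D a -> ~ incons n D b ->
  ~ incons n D (And a b) /\ ~ incons n D (Or a b) /\ ~ incons n D (Imp a b).
Proof.
  intros Ca Cb.
  assert (W : D ⊢ And (And (fwell n (And a b)) (fwell n (Or a b))) (fwell n (Imp a b))).
  { apply (DMP _ _ (And (fwell n a) (fwell n b))); [|apply DAx, Ax12].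
    apply deriv_and; split; now apply max_consistent_well. }
  rewrite !deriv_and in W. destruct W as [[Wand Wor] Wimp].
  split; [|split]; now apply max_well_consistent.
Qed.

(* Every inconsistent formula has a depth: take the first consistent power x^m
   (m <= n exists, otherwise x^(n) would be proved); if D proved x^m, then all
   x^1, ..., x^n would be proved, contradicting Ax11. *)
Lemma depth_spec_exists x : incons n D x -> exists k, depth_spec n D x k.
Proof.
  intro Ix.
  set (P := fun j => j <= n /\ ~ incons n D (fpow j x)).
  destruct (classic (exists j, P j)) as [HP|HP].
  - destruct (dec_inh_nat_subset_has_unique_least_element P (fun j => classic (P j)) HP)
      as [m [[[Hm Cm] Least] _]].
    assert (Below : forall j, j < m -> incons n D (fpow j x)).
    { intros j Hj. apply NNPP; intro Cj.
      assert (Pj : P j) by (split; [lia | exact Cj]). specialize (Least j Pj). lia. }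
    assert (m <> 0) by (intros ->; contradiction).
    exists (m - 1). split; [lia | split; [intros j Hj; apply Below; lia|]].
    replace (S (m - 1)) with m by lia. intro Dm.
    apply (max_well_consistent x); [|exact Ix].
    apply (conj_pred_fwell (derivCn n D)); [apply deriv_and | exact Hn |]. intros j Hj.
    destruct (Nat.lt_total j m) as [L|[->|L]]; [now apply Below | exact Dm|].
    replace j with (S (j - S m) + m) by lia. rewrite <- fpow_add. now apply max_pow.
  - exfalso. apply (max_well_consistent x); [|exact Ix].
    apply (conj_pred_fwell (derivCn n D)); [apply deriv_and | exact Hn |]. intros j Hj.
    apply NNPP; intro Nj. apply HP. exists j. split; [lia | now intros []].
Qed.

End MaximalTheory.

Lemma forallb_firstn_iff (z : list bool) k : k <= length z ->
  forallb (fun b => b) (firstn k z) = true <-> forall j, j < k -> nth j z false = true.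
Proof.
  intro Hk. rewrite forallb_forall. split.
  - intros H j Hj. apply H. replace (nth j z false) with (nth j (firstn k z) false).
    + apply nth_In. rewrite length_firstn; lia.
    + rewrite nth_firstn. now replace (j <? k) with true by (symmetry; apply Nat.ltb_lt, Hj).
  - intros H x Hx. apply (In_nth _ _ false) in Hx as [j [Hj <-]].
    rewrite length_firstn in Hj. rewrite nth_firstn.
    replace (j <? k) with true by (symmetry; apply Nat.ltb_lt; lia). apply H; lia.
Qed.

Lemma inB_iff n z : inB n z <-> length z = n + 1 /\
  forall k, 1 <= k <= n -> (forall j, j < k -> nth j z false = true) \/ nth k z false = true.
Proof.
  unfold inB, coord. split; intros [L H]; split; auto; intros k Hk; specialize (H k Hk);
    replace (pred (k + 1)) with k in * by lia.
  - apply orb_true_iff in H. now rewrite <- forallb_firstn_iff by lia.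
  - apply orb_true_iff. now rewrite forallb_firstn_iff by lia.
Qed.

Lemma inB_single_zero n z m j : inB n z -> m < n + 1 -> j < n + 1 ->
  nth m z false = false -> j <> m -> nth j z false = true.
Proof.
  intros [L H]%inB_iff Hm Hj Zm Njm.
  assert (After : forall i k, i < k < n + 1 -> nth i z false = false -> nth k z false = true).
  { intros i k Hik Zi. destruct (H k ltac:(lia)) as [A|A]; [|exact A].
    rewrite (A i) in Zi; [discriminate | lia]. }
  destruct (Nat.lt_trichotomy j m) as [Lt|[Eq|Gt]]; [|contradiction|].
  - destruct (nth j z false) eqn:Zj; [reflexivity|].
    rewrite (After j m) in Zm; [discriminate | lia | exact Zj].
  - now apply (After m j); [lia|].
Qed.

Lemma length_tn n k : length (tn n k) = n + 1.
Proof. unfold tn; now rewrite length_map, length_seq. Qed.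

Lemma length_Tn n : 1 <= n -> length (Tn n) = n + 1.
Proof. intro; unfold Tn; simpl; rewrite repeat_length; lia. Qed.

Lemma length_Fn n : length (Fn n) = n + 1.
Proof. unfold Fn; simpl; rewrite repeat_length; lia. Qed.

Lemma nth_tn n k j : j < n + 1 -> nth j (tn n k) false = negb (j =? k + 2).
Proof.
  intro Hj. unfold tn.
  rewrite (nth_indep _ false ((fun i => negb (i =? k + 2)) 0))
    by (rewrite length_map, length_seq; lia).
  rewrite (map_nth (fun i => negb (i =? k + 2))). now rewrite seq_nth by lia.
Qed.

Lemma nth_Tn n j : 2 <= j < n + 1 -> nth j (Tn n) false = true.
Proof. intro; unfold Tn; destruct j as [|[|j]]; [lia|lia|]; simpl; apply nth_repeat_lt; lia. Qed.

Lemma nth_Fn n j : 1 <= j < n + 1 -> nth j (Fn n) false = true.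
Proof. intro; unfold Fn; destruct j as [|j]; [lia|]; simpl; apply nth_repeat_lt; lia. Qed.

Lemma coord_tn_1 n k : coord (tn n k) 1 = true.
Proof. unfold coord; simpl pred; rewrite nth_tn by lia; apply negb_true_iff, Nat.eqb_neq; lia. Qed.

Lemma coord_tn_2 n k : 1 <= n -> coord (tn n k) 2 = true.
Proof. intro; unfold coord; simpl pred; rewrite nth_tn by lia; apply negb_true_iff, Nat.eqb_neq; lia. Qed.

Lemma coord_Fn_2 n : 1 <= n -> coord (Fn n) 2 = true.
Proof. intro; destruct n; [lia | reflexivity]. Qed.

Lemma inB_tn n k : inB n (tn n k).
Proof.
  apply inB_iff; split; [apply length_tn|]. intros i Hi.
  destruct (Nat.eq_dec i (k + 2)) as [->|Ne]; [left; intros j Hj | right];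
    rewrite nth_tn by lia; apply negb_true_iff, Nat.eqb_neq; lia.
Qed.

Lemma inB_Tn n : 1 <= n -> inB n (Tn n).
Proof.
  intro Hn. apply inB_iff; split; [now apply length_Tn|]. intros i Hi.
  destruct (Nat.eq_dec i 1) as [->|Ne]; [left; intros j Hj; now replace j with 0 by lia|].
  right; apply nth_Tn; lia.
Qed.

Lemma inB_Fn n : inB n (Fn n).
Proof. apply inB_iff; split; [apply length_Fn|]. intros i Hi; right; apply nth_Fn; lia. Qed.

Lemma tn_ne_Tn n k : 1 <= n -> tn n k <> Tn n.
Proof. intros Hn E. pose proof (coord_tn_2 n k Hn) as C. now rewrite E in C. Qed.

Lemma tn_ne_Fn n k : tn n k <> Fn n.
Proof. intro E. pose proof (coord_tn_1 n k) as C. now rewrite E in C. Qed.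

Lemma tn_inj n k k' : k <= n - 1 -> k' <= n - 1 -> tn n k = tn n k' -> k = k'.
Proof.
  assert (Lt : forall a b, a < b <= n - 1 -> tn n a <> tn n b).
  { intros a b Hab E. apply (f_equal (fun z => nth (a + 2) z false)) in E.
    rewrite !nth_tn, Nat.eqb_refl in E by lia.
    now replace (a + 2 =? b + 2) with false in E by (symmetry; apply Nat.eqb_neq; lia). }
  intros Hk Hk' E. destruct (Nat.lt_trichotomy k k') as [L|[Eq|L]]; [|exact Eq|].
  - exfalso; exact (Lt k k' ltac:(lia) E).
  - exfalso; exact (Lt k' k ltac:(lia) (eq_sym E)).
Qed.

Lemma inB_eq_Fn n z : inB n z -> coord z 1 = false -> z = Fn n.
Proof.
  intros HB Z. apply nth_ext with false false; [now rewrite (proj1 HB), length_Fn|].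
  intros [|j] Hj; [exact Z|]. rewrite (proj1 HB) in Hj. rewrite nth_Fn by lia.
  apply (inB_single_zero n z 0); auto; lia.
Qed.

Lemma inB_eq_Tn n z : 1 <= n -> inB n z -> coord z 1 = true -> coord z 2 = false -> z = Tn n.
Proof.
  intros Hn HB Z1 Z2. apply nth_ext with false false; [now rewrite (proj1 HB), length_Tn|].
  intros [|[|j]] Hj; [exact Z1 | exact Z2 |]. rewrite (proj1 HB) in Hj. rewrite nth_Tn by lia.
  apply (inB_single_zero n z 1); auto; lia.
Qed.

Lemma inB_non_boolean n z : 1 <= n -> inB n z -> ~ inBoo n z -> exists k, k <= n - 1 /\ z = tn n k.
Proof.
  intros Hn HB NB. pose proof (proj1 HB) as L.
  destruct (coord z 1) eqn:Z1; [|exfalso; apply NB; right; now apply inB_eq_Fn].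
  destruct (coord z 2) eqn:Z2; [|exfalso; apply NB; left; now apply inB_eq_Tn].
  unfold coord in Z1, Z2; simpl in Z1, Z2.
  destruct (classic (exists m, m < n + 1 /\ nth m z false = false)) as [[m [Hm Zm]]|NZ].
  - assert (2 <= m) by (destruct m as [|[|m]]; [congruence|congruence|lia]).
    exists (m - 2). split; [lia|]. apply nth_ext with false false; [now rewrite L, length_tn|].
    intros j Hj. rewrite L in Hj. rewrite nth_tn by lia.
    destruct (Nat.eq_dec j m) as [->|Ne].
    + now rewrite Zm, Nat.sub_add, Nat.eqb_refl.
    + replace (j =? m - 2 + 2) with false by (symmetry; apply Nat.eqb_neq; lia).
      now apply (inB_single_zero n z m).
  - exists (n - 1). split; [lia|]. apply nth_ext with false false; [now rewrite L, length_tn|].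
    intros j Hj. rewrite L in Hj. rewrite nth_tn by lia.
    replace (j =? n - 1 + 2) with false by (symmetry; apply Nat.eqb_neq; lia).
    destruct (nth j z false) eqn:Zj; [reflexivity | exfalso; apply NZ; now exists j].
Qed.

Lemma binM_coord_1 n op z w u : binM n op z w u -> coord u 1 = op (coord z 1) (coord w 1).
Proof.
  intros [HB HN]. destruct (classic (inBoo n z /\ inBoo n w)) as [X|X];
    [apply HB in X | apply HN in X]; tauto.
Qed.

Lemma binM_boolean n op z w u : binM n op z w u -> inBoo n z -> inBoo n w -> inBoo n u.
Proof. intros [HB _] Bz Bw. now apply HB. Qed.

Section Valuations.

Variables (n : nat) (nu : form -> tv).
Hypothesis Hval : valuation n nu.

Lemma inD_and a b : inD (nu (And a b)) <-> inD (nu a) /\ inD (nu b).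
Proof.
  destruct Hval as (_ & _ & Hand & _). unfold inD.
  rewrite (binM_coord_1 _ _ _ _ _ (Hand a b)). apply andb_true_iff.
Qed.

Lemma inD_or a b : inD (nu (Or a b)) <-> inD (nu a) \/ inD (nu b).
Proof.
  destruct Hval as (_ & _ & _ & Hor & _). unfold inD.
  rewrite (binM_coord_1 _ _ _ _ _ (Hor a b)). apply orb_true_iff.
Qed.

Lemma inD_imp a b : inD (nu (Imp a b)) <-> (inD (nu a) -> inD (nu b)).
Proof.
  destruct Hval as (_ & _ & _ & _ & Himp). unfold inD.
  rewrite (binM_coord_1 _ _ _ _ _ (Himp a b)).
  destruct (coord (nu a) 1), (coord (nu b) 1); simpl; intuition congruence.
Qed.

Lemma inD_neg a : inD (nu (Neg a)) <-> coord (nu a) 2 = true.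
Proof. destruct Hval as (_ & Hneg & _). unfold inD. now rewrite (proj1 (proj2 (Hneg a))). Qed.

Lemma neg_Tn a : nu a = Tn n -> nu (Neg a) = Fn n.
Proof.
  intro E. destruct Hval as (HB & Hneg & _). apply (inB_eq_Fn _ _ (HB (Neg a))).
  now rewrite (proj1 (proj2 (Hneg a))), E.
Qed.

Lemma neg_Fn a : 1 <= n -> nu a = Fn n -> nu (Neg a) = Tn n.
Proof.
  intros Hn E. destruct Hval as (HB & Hneg & _). destruct (Hneg a) as (_ & E1 & E2).
  rewrite E in E1, E2. apply (inB_eq_Tn _ _ Hn (HB (Neg a))).
  - now rewrite E1, coord_Fn_2.
  - now destruct (coord (nu (Neg a)) 2).
Qed.

Lemma boolean_pow1 a : 1 <= n -> inBoo n (nu a) -> nu (fpow 1 a) = Tn n.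
Proof.
  intros Hn Ba. destruct Hval as (_ & _ & Hand & _).
  assert (Bna : inBoo n (nu (Neg a)) /\ coord (nu (Neg a)) 1 = negb (coord (nu a) 1)).
  { destruct Ba as [E|E]; [rewrite (neg_Tn _ E) | rewrite (neg_Fn _ Hn E)]; rewrite E;
      split; (reflexivity || now (left + right)). }
  assert (Contra : nu (And a (Neg a)) = Fn n).
  { destruct Bna as [Bna Cna]. pose proof (binM_coord_1 _ _ _ _ _ (Hand a (Neg a))) as C.
    rewrite Cna, andb_negb_r in C.
    destruct (binM_boolean _ _ _ _ _ (Hand a (Neg a)) Ba Bna) as [E|E]; [|exact E].
    now rewrite E in C. }
  exact (neg_Fn _ Hn Contra).
Qed.

Lemma boolean_pow a j : 1 <= n -> inBoo n (nu a) -> nu (fpow (S j) a) = Tn n.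
Proof.
  intros Hn Ba. induction j as [|j IH]; [now apply boolean_pow1|].
  apply (boolean_pow1 (fpow (S j) a) Hn). now left.
Qed.

End Valuations.

Section RestrictedValuations.

Variables (n : nat) (nu : form -> tv).
Hypothesis Hn : 1 <= n.
Hypothesis Hnu : inFCn n nu.

(* From t^n_k the restriction F_{C_n} makes the powers descend to
   t^n_0, and then a^(k+1) = ~(a^k /\ ~a^k) is false. *)
Lemma well_designated a : inD (nu (fwell n a)) <-> inBoo n (nu a).
Proof.
  destruct Hnu as (Hval & Hzero & Hsucc).
  rewrite (conj_pred_fwell (fun x => inD (nu x)) n a); [| exact (inD_and n nu Hval) | exact Hn]. split.
  - intro W. apply NNPP; intro NB.
    destruct (inB_non_boolean n (nu a) Hn (proj1 Hval a) NB) as [k [Hk E]].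
    assert (Descent : forall j, j <= k -> nu (fpow j a) = tn n (k - j)).
    { induction j as [|j IH]; intro Hj; [now rewrite Nat.sub_0_r|].
      destruct (Hsucc (fpow j a) (k - j) ltac:(lia) (IH ltac:(lia))) as [_ X].
      change (fpow 1 (fpow j a)) with (fpow (S j) a) in X. rewrite X. f_equal; lia. }
    specialize (Descent k (le_n k)). rewrite Nat.sub_diag in Descent.
    specialize (W (S k) ltac:(lia)). change (inD (nu (Neg (And (fpow k a) (Neg (fpow k a)))))) in W.
    apply (inD_neg _ _ Hval) in W.
    now rewrite (Hzero _ Descent) in W.
  - intros Ba [|j] Hj; [lia|]. unfold inD. now rewrite (boolean_pow _ _ Hval a j Hn Ba).
Qed.

Lemma axiom_designated a : axiomCn n a -> inD (nu a).
Proof.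
  pose proof (proj1 Hnu) as Hval.
  destruct 1;
    repeat (rewrite (inD_imp _ _ Hval) || rewrite (inD_and _ _ Hval) || rewrite (inD_or _ _ Hval));
    try tauto.
  - rewrite (inD_neg _ _ Hval).
    destruct (proj2 (proj1 (inB_iff n (nu a)) (proj1 Hval a)) 1 ltac:(lia)) as [H|H].
    + left; exact (H 0 ltac:(lia)).
    + now right.
  - intro H. apply (inD_neg _ _ Hval) in H.
    destruct (proj1 (proj2 Hval) a) as (_ & _ & L). now rewrite H in L.
  - intros W A N. exfalso. apply well_designated in W. apply (inD_neg _ _ Hval) in N.
    unfold inD in A. destruct W as [W|W]; rewrite W in *; discriminate.
  - intros [Wa Wb]. apply well_designated in Wa, Wb. rewrite !well_designated.
    destruct Hval as (_ & _ & Hand & Hor & Himp).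
    repeat split; eapply binM_boolean; eauto.
Qed.

End RestrictedValuations.

Theorem soundness n G phi : 1 <= n -> derivCn n G phi -> RNconseq n G phi.
Proof.
  intros Hn D nu Hnu HG. induction D as [x Hx|x Hx|x y _ IH1 _ IH2].
  - now apply HG.
  - now apply (axiom_designated n).
  - exact (proj1 (inD_imp _ _ (proj1 Hnu) x y) IH2 IH1).
Qed.

Lemma binM_intro n op z w u : inB n u -> coord u 1 = op (coord z 1) (coord w 1) ->
  (inBoo n z -> inBoo n w -> inBoo n u) -> binM n op z w u.
Proof. intros Bu Cu Cl. split; intro X; split; auto. apply Cl; tauto. Qed.

Section CanonicalValuation.

Variables (n : nat) (D : form -> Prop) (phi : form).
Hypothesis Hn : 1 <= n.
Hypothesis Hmax : maximal n D phi.
Local Notation "G ⊢ a" := (derivCn n G a) (at level 70).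

Definition depth (x : form) : nat := epsilon (inhabits 0) (depth_spec n D x).

Definition canonical (x : form) : tv :=
  if excluded_middle_informative (D ⊢ x) then
    if excluded_middle_informative (D ⊢ Neg x) then tn n (depth x) else Tn n
  else Fn n.

Lemma depth_correct x : incons n D x -> depth_spec n D x (depth x).
Proof. intro I. unfold depth. apply epsilon_spec. exact (depth_spec_exists n D phi Hn Hmax x I). Qed.

Lemma canonical_cases x :
  (incons n D x /\ canonical x = tn n (depth x)) \/
  (D ⊢ x /\ ~ D ⊢ Neg x /\ canonical x = Tn n) \/
  (~ D ⊢ x /\ D ⊢ Neg x /\ canonical x = Fn n).
Proof.
  unfold canonical.
  destruct (excluded_middle_informative (D ⊢ x)) as [A|A];
    [destruct (excluded_middle_informative (D ⊢ Neg x)) as [B|B] |].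
  - left; repeat split; auto.
  - right; left; auto.
  - right; right; repeat split; auto. now destruct (max_excluded n D phi Hmax x).
Qed.

Lemma canonical_incons x : incons n D x -> canonical x = tn n (depth x).
Proof.
  intro I. destruct (canonical_cases x) as [[_ E]|[[_ [N _]]|[N _]]]; [exact E | |];
    exfalso; apply N, I.
Qed.

Lemma canonical_coord_1 x : coord (canonical x) 1 = true <-> D ⊢ x.
Proof.
  destruct (canonical_cases x) as [[[A _] ->]|[[A [_ ->]]|[A [_ ->]]]].
  - now rewrite coord_tn_1.
  - easy.
  - split; [discriminate | contradiction].
Qed.

Lemma canonical_coord_2 x : coord (canonical x) 2 = true <-> D ⊢ Neg x.
Proof.
  destruct (canonical_cases x) as [[[_ B] ->]|[[_ [B ->]]|[_ [B ->]]]].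
  - now rewrite coord_tn_2.
  - split; [discriminate | contradiction].
  - now rewrite coord_Fn_2.
Qed.

Lemma canonical_boolean x : inBoo n (canonical x) <-> ~ incons n D x.
Proof.
  unfold inBoo. destruct (canonical_cases x) as [[I ->]|[[A [B ->]]|[A [_ ->]]]].
  - split; [intros [E|E]; [now apply tn_ne_Tn in E | now apply tn_ne_Fn in E] | tauto].
  - split; [intros _ [_ C]; contradiction | now left].
  - split; [intros _ [C _]; contradiction | now right].
Qed.

Lemma canonical_inB x : inB n (canonical x).
Proof.
  destruct (canonical_cases x) as [[_ ->]|[[_ [_ ->]]|[_ [_ ->]]]];
    [apply inB_tn | now apply inB_Tn | apply inB_Fn].
Qed.

Lemma canonical_tn x k : k <= n - 1 -> canonical x = tn n k -> incons n D x /\ depth_spec n D x k.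
Proof.
  intros Hk E. destruct (canonical_cases x) as [[I E']|[[_ [_ E']]|[_ [_ E']]]]; rewrite E' in E.
  - pose proof (depth_correct x I) as Hd. split; [exact I|].
    now rewrite <- (tn_inj n (depth x) k (proj1 Hd) Hk E).
  - symmetry in E; now apply tn_ne_Tn in E.
  - symmetry in E; now apply tn_ne_Fn in E.
Qed.

Lemma canonical_valuation : valuation n canonical.
Proof.
  assert (Closed : forall a b, inBoo n (canonical a) -> inBoo n (canonical b) ->
    inBoo n (canonical (And a b)) /\ inBoo n (canonical (Or a b)) /\ inBoo n (canonical (Imp a b))).
  { intros a b. rewrite !canonical_boolean. now apply (max_consistent_closed n D phi). }
  split; [exact canonical_inB | split; [|split; [|split]]].
  - intro a. split; [apply canonical_inB | split].
    + apply eq_iff_eq_true. now rewrite canonical_coord_1, canonical_coord_2.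
    + destruct (coord (canonical (Neg a)) 2) eqn:E; [|reflexivity]. simpl.
      apply canonical_coord_1, deriv_neg_neg, canonical_coord_2, E.
  - intros a b. apply binM_intro; [apply canonical_inB | | now apply Closed].
    apply eq_iff_eq_true. now rewrite andb_true_iff, !canonical_coord_1, deriv_and.
  - intros a b. apply binM_intro; [apply canonical_inB | | now apply Closed].
    apply eq_iff_eq_true. now rewrite orb_true_iff, !canonical_coord_1, (max_or n D phi).
  - intros a b. apply binM_intro; [apply canonical_inB | | now apply Closed].
    apply eq_iff_eq_true. rewrite canonical_coord_1, (max_imp n D phi Hn Hmax), <- !canonical_coord_1.
    destruct (coord (canonical a) 1), (coord (canonical b) 1); simpl; intuition congruence.
Qed.

(* It satisfies the restriction F_{C_n}: depth 0 makes a /\ ~a true and consistent;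
   depth k >= 1 makes a /\ ~a inconsistent and a^1 of depth k-1. *)
Lemma canonical_restricted : inFCn n canonical.
Proof.
  split; [exact canonical_valuation | split].
  - intros a E. destruct (canonical_tn a 0 ltac:(lia) E) as [[A NA] (_ & _ & N1)].
    destruct (canonical_cases (And a (Neg a))) as [[[_ C] _]|[[_ [_ ->]]|[C _]]];
      [now contradiction N1 | reflexivity | now contradiction C; apply deriv_and].
  - intros a k Hk E. destruct (canonical_tn a k ltac:(lia) E) as [[A NA] Hd].
    assert (I1 : incons n D (fpow 1 a)) by (apply (proj1 (proj2 Hd)); lia).
    assert (Iaa : incons n D (And a (Neg a))) by (split; [now apply deriv_and | exact (proj1 I1)]).
    split; [split; [apply canonical_inB | now rewrite canonical_boolean] |].
    rewrite (canonical_incons _ I1). f_equal.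
    apply (depth_spec_unique n D (fpow 1 a)); [now apply depth_correct|].
    apply depth_spec_pow1. replace (S (k - 1)) with k by lia. exact Hd.
Qed.

End CanonicalValuation.

Theorem completeness n G phi : 1 <= n -> RNconseq n G phi -> derivCn n G phi.
Proof.
  intros Hn R. apply NNPP; intro N.
  destruct (lindenbaum n G phi N) as [D [HGD Hmax]].
  apply (proj1 Hmax), (canonical_coord_1 n D phi Hmax).
  apply R; [exact (canonical_restricted n D phi Hn Hmax)|].
  intros g Hg. apply (canonical_coord_1 n D phi Hmax), DHyp, HGD, Hg.
Qed.

Theorem mainTheorem13 (n : nat) (Hn : 2 <= n) (Gamma : form -> Prop) (phi : form) :
  derivCn n Gamma phi <-> RNconseq n Gamma phi.
Proof. split; [apply soundness | apply completeness]; lia. Qed.
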